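(* Let $M$ and $N$ be matroids and let $P$ be a tensor product of $M$ and $N$. Let $S,T$ be disjoint subsets of $E(M)$ and $M'=M\setminus S/T$. Then $P'=P\setminus(S\times E(N))/(T\times E(N))$ is a tensor product of $M'$ and $N$.
   Context: Let $M,N$ be matroids on $E(M),E(N)$. A quasi product of $M$ and $N$ is a matroid $P$ on $E(M)\times E(N)$ such that: for every non-loop $e\in E(M)$ the map $x\mapsto(e,x)$ is an isomorphism from $N$ onto $P|_{\{e\}\times E(N)}$; for every non-loop $f\in E(N)$ the map $x\mapsto(x,f)$ is an isomorphism from $M$ onto $P|_{E(M)\times\{f\}}$; for a loop $e$ of $M$, $P|_{\{e\}\times E(N)}$ has rank $0$; for a loop $f$ of $N$, $P|_{E(M)\times\{f\}}$ has rank $0$. A tensor product of $M$ and $N$ is a quasi product of rank $\mathrm{rk}(M)\mathrm{rk}(N)$. *)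

From mathcomp Require Import all_boot.
Set Implicit Arguments. Unset Strict Implicit. Unset Printing Implicit Defensive.

(* A (finite) matroid on a finite carrier type T: a ground set E and a rank
   function r, only meaningful on subsets of E. *)
Record matroid (T : finType) := Matroid { ground : {set T}; rk : {set T} -> nat }.

Definition is_matroid (T : finType) (M : matroid T) : Prop :=
  [/\ (forall X : {set T}, X \subset ground M -> rk M X <= #|X|),
      (forall X Y : {set T}, X \subset Y -> Y \subset ground M -> rk M X <= rk M Y) &
      (forall X Y : {set T}, X \subset ground M -> Y \subset ground M ->
         rk M (X :|: Y) + rk M (X :&: Y) <= rk M X + rk M Y)].

Definition mrank (T : finType) (M : matroid T) : nat := rk M (ground M).

Definition mdelete (T : finType) (M : matroid T) (S : {set T}) : matroid T :=
  Matroid (ground M :\: S) (rk M).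
Definition mcontract (T : finType) (M : matroid T) (C : {set T}) : matroid T :=
  Matroid (ground M :\: C) (fun X => rk M (X :|: C) - rk M C).

Definition minor (T : finType) (M : matroid T) (S C : {set T}) : matroid T :=
  mcontract (mdelete M S) C.

Definition is_loop (T : finType) (M : matroid T) (e : T) : Prop :=
  e \in ground M /\ rk M [set e] = 0.
Definition is_nonloop (T : finType) (M : matroid T) (e : T) : Prop :=
  e \in ground M /\ rk M [set e] <> 0.

(* The map x |-> (e,x)
   is a bijection E(N) -> {e} x E(N); it is an isomorphism N -> P|_{e}xE(N)
   iff it preserves the rank of every subset of E(N). *)
Definition is_quasi_product (T1 T2 : finType) (M : matroid T1) (N : matroid T2)
    (P : matroid (T1 * T2)%type) : Prop :=
  [/\ is_matroid P /\ ground P = setX (ground M) (ground N),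
      (forall e, is_nonloop M e -> forall X : {set T2}, X \subset ground N ->
          rk P [set (e, x) | x in X] = rk N X),
      (forall f, is_nonloop N f -> forall X : {set T1}, X \subset ground M ->
          rk P [set (x, f) | x in X] = rk M X),
      (forall e, is_loop M e -> rk P (setX [set e] (ground N)) = 0) &
      (forall f, is_loop N f -> rk P (setX (ground M) [set f]) = 0)].

Definition is_tensor_product (T1 T2 : finType) (M : matroid T1) (N : matroid T2)
    (P : matroid (T1 * T2)%type) : Prop :=
  is_quasi_product M N P /\ mrank P = mrank M * mrank N.

From mathcomp Require Import all_boot zify.

(* For a basis B_A of A \subset E(M) and a basis B_N of N, the row and column
   isomorphisms show that B_A x B_N spans A x E(N) in P.  For A = E(M) this and
   rk P = rk M * rk N force B x B_N to be independent for every basis B of M, so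
   every subset of a product of independent sets is independent and
   rk_P (A x E(N)) = rk_M A * rk N.  The contraction by T x E(N) is then computed
   with explicit bases: for a nonloop e of M / T, {e} x B_Y \cup B_T x B_N is
   independent and spans {e} x Y \cup T x E(N); for a nonloop f of N,
   B x {f} \cup B_T x B_N does the same for X x {f} \cup T x E(N), where B is a
   basis of X \cup T extending B_T.  Deletion only shrinks the ground set. *)

Set Implicit Arguments. Unset Strict Implicit. Unset Printing Implicit Defensive.

Section Rank.
Variables (T : finType) (M : matroid T).
Hypothesis HM : is_matroid M.
Implicit Types A B C I X Y Z BC : {set T}.

Lemma rk_le_card X : X \subset ground M -> rk M X <= #|X|.
Proof. by case: HM => h _ _; apply: h. Qed.

Lemma rk_mono X Y : X \subset Y -> Y \subset ground M -> rk M X <= rk M Y.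
Proof. by case: HM => _ h _; apply: h. Qed.

Lemma rk_set0 : rk M set0 = 0.
Proof. by apply/eqP; rewrite -leqn0 -(cards0 T) rk_le_card ?sub0set. Qed.

Lemma rk_submodS X Y Z : X \subset Y :&: Z -> Y \subset ground M -> Z \subset ground M ->
  rk M (Y :|: Z) + rk M X <= rk M Y + rk M Z.
Proof.
case: HM => _ _ submod XYZ YE ZE; apply: leq_trans (submod _ _ YE ZE).
by rewrite leq_add2l rk_mono // (subset_trans (subsetIl _ _)).
Qed.

Definition indep (X : {set T}) := rk M X == #|X|.

Lemma indepS X Y : Y \subset X -> X \subset ground M -> indep X -> indep Y.
Proof.
move=> YX XE /eqP rX; have YE := subset_trans YX XE.
have DE : X :\: Y \subset ground M := subset_trans (subsetDl _ _) XE.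
have XU : Y :|: X :\: Y = X by rewrite -{1}(setIidPr YX) setID.
have := rk_submodS (sub0set (Y :&: (X :\: Y))) YE DE.
rewrite XU rk_set0 rX -(cardsID Y X) (setIidPr YX).
have := rk_le_card YE; have := rk_le_card DE; rewrite /indep; lia.
Qed.

Definition spans (A Y : {set T}) := rk M (A :|: Y) = rk M A.

Lemma spans_of_rk_le A Y : A :|: Y \subset ground M -> rk M (A :|: Y) <= rk M A -> spans A Y.
Proof. by move=> AYE le; apply/eqP; rewrite eqn_leq le rk_mono ?subsetUl. Qed.

Lemma spans_of_rk_eq A Y : A \subset Y -> rk M A = rk M Y -> spans A Y.
Proof. by move=> AY rAY; rewrite /spans (setUidPr AY). Qed.

Lemma spans_rk A Y : A \subset Y -> spans A Y -> rk M Y = rk M A.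
Proof. by move=> AY; rewrite /spans (setUidPr AY). Qed.

Lemma spans_rk_le A Y : A :|: Y \subset ground M -> spans A Y -> rk M Y <= rk M A.
Proof. by move=> AYE <-; rewrite rk_mono ?subsetUr. Qed.

Lemma spansSr A Y Z : A :|: Y \subset ground M -> Z \subset Y -> spans A Y -> spans A Z.
Proof.
move=> AYE ZY AY; have AZE := subset_trans (setUS A ZY) AYE.
by apply: spans_of_rk_le => //; rewrite -AY rk_mono ?setUS.
Qed.

Lemma spansSl A A' Y : A \subset A' -> A' :|: Y \subset ground M -> spans A Y -> spans A' Y.
Proof.
move=> AA' A'YE AY; move: (A'YE) => /subUsetP[A'E YE].
have AYE : A :|: Y \subset ground M by rewrite subUset YE (subset_trans AA').
have AYA' : A \subset (A :|: Y) :&: A' by rewrite subsetI subsetUl.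
have := rk_submodS AYA' AYE A'E; rewrite setUAC (setUidPr AA') AY.
by rewrite addnC leq_add2l => /(spans_of_rk_le A'YE).
Qed.

Lemma spansU A Y Z : A :|: (Y :|: Z) \subset ground M ->
  spans A Y -> spans A Z -> spans A (Y :|: Z).
Proof.
move=> AYZE AY AZ; move: (AYZE); rewrite !subUset => /and3P[AE YE ZE].
have AYAZ : A \subset (A :|: Y) :&: (A :|: Z) by rewrite subsetI !subsetUl.
have := rk_submodS AYAZ; rewrite -setUUr AY AZ !subUset AE YE ZE.
by move=> /(_ isT isT); rewrite leq_add2r => /(spans_of_rk_le AYZE).
Qed.

Lemma spansUU A1 A2 Y1 Y2 : (A1 :|: A2) :|: (Y1 :|: Y2) \subset ground M ->
  spans A1 Y1 -> spans A2 Y2 -> spans (A1 :|: A2) (Y1 :|: Y2).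
Proof.
move=> AYE AY1 AY2; move: (AYE); rewrite !subUset => /andP[/andP[A1E A2E] /andP[Y1E Y2E]].
have AE : A1 :|: A2 \subset ground M by rewrite subUset A1E A2E.
apply: spansU => //.
  by apply: (spansSl (subsetUl _ _) _ AY1); rewrite subUset AE.
by apply: (spansSl (subsetUr _ _) _ AY2); rewrite subUset AE.
Qed.

Lemma spans_trans A Y Z : A :|: Y :|: Z \subset ground M ->
  spans A Y -> spans (A :|: Y) Z -> spans A Z.
Proof.
move=> AYZE AY AYZ; have AZE : A :|: Z \subset ground M.
  by apply: subset_trans AYZE; rewrite setUAC subsetUl.
by apply: spans_of_rk_le => //; rewrite -AY -AYZ rk_mono // setUAC subsetUl.
Qed.

Lemma spans_rk0 A Z : A :|: Z \subset ground M -> rk M Z = 0 -> spans A Z.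
Proof.
move=> AZE rZ; move: (AZE) => /subUsetP[AE ZE].
have := rk_submodS (sub0set (A :&: Z)) AE ZE; rewrite rk_set0 rZ !addn0.
exact: spans_of_rk_le.
Qed.

Lemma spans_pointwise A Y : A :|: Y \subset ground M ->
  {in Y, forall y, spans A [set y]} -> spans A Y.
Proof.
move=> AYE AY; rewrite -(set_enum Y).
have : {subset enum Y <= Y} by move=> y; rewrite mem_enum.
elim: (enum Y) => [|y s IHs] sY; first by rewrite set_nil /spans setU0.
have sub : [set:: y :: s] \subset Y by apply/subsetP => z; rewrite inE => /sY.
rewrite set_cons; apply: spansU; first by rewrite -set_cons (subset_trans _ AYE) ?setUS.
  by apply: AY; apply: sY; apply: mem_head.
by apply: IHs => z zs; apply: sY; rewrite inE zs orbT.
Qed.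

Definition basis_of X B := [/\ B \subset X, indep B & rk M B = rk M X].

Lemma basis_extend I X : I \subset X -> X \subset ground M -> indep I ->
  exists2 B : {set T}, I \subset B & basis_of X B.
Proof.
(* A largest independent B with I \subset B \subset X spans X. *)
move=> IX XE indI; pose P := [pred B : {set T} | [&& I \subset B, B \subset X & indep B]].
have PI : P I by rewrite /= subxx IX.
case: (arg_maxnP (fun B => #|B|) PI) => B /and3P[IB BX indB] maxB.
exists B => //; split=> //; have BE := subset_trans BX XE.
apply/eqP; rewrite eqn_leq rk_mono //=.
apply: spans_rk_le; first by rewrite subUset BE.
apply: spans_pointwise => [|x xX]; first by rewrite subUset BE.
have xE : x \in ground M by apply: subsetP xX.
have [xB | xB] := boolP (x \in B); first by rewrite /spans (setUidPl _) ?sub1set.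
have notind : ~~ indep (x |: B).
  apply: contraL (leqnn #|B|) => ind; rewrite -ltnNge.
  have := maxB (x |: B); rewrite cardsU1 xB inE ind subUset sub1set xX BX.
  by rewrite (subset_trans IB (subsetUr _ _)) => /(_ isT).
have xBE : x |: B \subset ground M by rewrite subUset sub1set xE BE.
apply: spans_of_rk_le; rewrite setUC // (eqP indB) -ltnS.
by have := rk_le_card xBE; rewrite leq_eqVlt -/(indep _) (negbTE notind) cardsU1 xB.
Qed.

Lemma basis_exists X : X \subset ground M -> exists B : {set T}, basis_of X B.
Proof.
move=> XE; have [|B _ bB] := basis_extend (sub0set X) XE; last by exists B.
by rewrite /indep rk_set0 cards0.
Qed.

Lemma basis_rk X B : basis_of X B -> rk M X = #|B|.
Proof. by case=> _ /eqP <- <-. Qed.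

Lemma nonloop_of_indep B a : B \subset ground M -> indep B -> a \in B -> is_nonloop M a.
Proof.
move=> BE indB aB; split; first exact: subsetP aB.
have /eqP -> : indep [set a] by apply: indepS BE indB; rewrite sub1set.
by rewrite cards1.
Qed.

Lemma indep_set1 a : is_nonloop M a -> indep [set a].
Proof.
case=> aE /eqP ra0; rewrite /indep cards1 eqn_leq lt0n ra0 andbT.
by rewrite -(cards1 a) rk_le_card ?sub1set.
Qed.

Lemma indep_setU1 C BC e : C \subset ground M -> basis_of C BC -> e \in ground M ->
  rk M C < rk M (e |: C) -> indep (e |: BC).
Proof.
move=> CE [BCC indBC rBC] eE ltC; have BCE := subset_trans BCC CE.
have eBCE : e |: BC \subset ground M by rewrite subUset sub1set eE BCE.
have sp : spans (e |: BC) C.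
  by apply: (spansSl (subsetUr _ _) _ (spans_of_rk_eq BCC rBC)); rewrite subUset eBCE.
have {sp} : rk M (e |: BC) = rk M (e |: C) by rewrite -sp -setUA (setUidPr BCC).
move: indBC ltC; rewrite /indep -rBC => /eqP -> ltC rkeBC.
have := rk_le_card eBCE; have := cardsU1 e BC; lia.
Qed.

Lemma mdelete_matroid S : is_matroid (mdelete M S).
Proof.
have sub X : X \subset ground M :\: S -> X \subset ground M.
  by move=> XE; apply: subset_trans XE (subsetDl _ _).
split=> [X /sub | X Y XY /sub | X Y /sub XE /sub YE]; first exact: rk_le_card.
  exact: rk_mono.
by case: HM => _ _; apply.
Qed.

Lemma mcontract_matroid C : C \subset ground M -> is_matroid (mcontract M C).
Proof.
move=> CE; have UCE X : X \subset ground M :\: C -> X :|: C \subset ground M.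
  by move=> XE; rewrite subUset CE andbT (subset_trans XE) ?subsetDl.
have geC X : X :|: C \subset ground M -> rk M C <= rk M (X :|: C).
  by move=> XCE; rewrite rk_mono ?subsetUr.
split=> /= [X /UCE/subUsetP[XE _] | X Y XY /UCE YCE | X Y /UCE XCE /UCE YCE].
- have := rk_submodS (sub0set (X :&: C)) XE CE; rewrite rk_set0.
  by have := rk_le_card XE; lia.
- by rewrite leq_sub2r // rk_mono // setSU.
- have := rk_submodS (subxx _) XCE YCE; rewrite -setUUl -setUIl.
  have := geC _ XCE; have := geC _ YCE.
  have := geC (X :&: Y) (subset_trans (setSU _ (subsetIl _ _)) XCE).
  by have := geC (X :|: Y); rewrite setUUl subUset XCE YCE => /(_ isT); lia.
Qed.
End Rank.

Section SetX.
Variables T1 T2 : finType.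
Implicit Types (A B : {set T1}) (C D : {set T2}).

Lemma setX_set1l (e : T1) C : [set (e, x) | x in C] = setX [set e] C.
Proof.
apply/setP => -[a b]; rewrite in_setX in_set1.
by apply/imsetP/andP => [[x xC [-> ->]] | [/eqP -> bC]]; [rewrite eqxx | exists b].
Qed.

Lemma setX_set1r (f : T2) A : [set (x, f) | x in A] = setX A [set f].
Proof.
apply/setP => -[a b]; rewrite in_setX in_set1.
by apply/imsetP/andP => [[x xA [-> ->]] | [aA /eqP ->]]; [rewrite eqxx | exists a].
Qed.

Lemma setXUl A B C : setX (A :|: B) C = setX A C :|: setX B C.
Proof. by apply/setP => -[a b]; rewrite !(in_setU, in_setX) andb_orl. Qed.

Lemma setXDl A B C : setX (A :\: B) C = setX A C :\: setX B C.
Proof.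
apply/setP => -[a b]; rewrite !(in_setD, in_setX).
by case: (a \in A); case: (a \in B); case: (b \in C).
Qed.

Lemma setXI A B C D : setX A C :&: setX B D = setX (A :&: B) (C :&: D).
Proof. by apply/setP => -[a b]; rewrite !(in_setI, in_setX) andbACA. Qed.
End SetX.

Section TensorProduct.
Variables (T1 T2 : finType) (M : matroid T1) (N : matroid T2) (P : matroid (T1 * T2)%type).
Hypotheses (HM : is_matroid M) (HN : is_matroid N) (HT : is_tensor_product M N P).
Implicit Types (A BA C BC I X : {set T1}) (J BN Y : {set T2}).

Lemma tensor_matroid : is_matroid P.
Proof. by case: HT => [[[]]]. Qed.

Lemma tensor_ground : ground P = setX (ground M) (ground N).
Proof. by case: HT => [[[]]]. Qed.

Let HP := tensor_matroid.
Let gP := tensor_ground.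

Let setX_ground A Y : A \subset ground M -> Y \subset ground N -> setX A Y \subset ground P.
Proof. by move=> AE YE; rewrite gP setXS. Qed.

Lemma tensor_rk_row e Y : is_nonloop M e -> Y \subset ground N ->
  rk P (setX [set e] Y) = rk N Y.
Proof. by move=> ne YE; case: HT => [[_ row _ _ _]] _; rewrite -setX_set1l row. Qed.

Lemma tensor_rk_col f X : is_nonloop N f -> X \subset ground M ->
  rk P (setX X [set f]) = rk M X.
Proof. by move=> nf XE; case: HT => [[_ _ col _ _]] _; rewrite -setX_set1r col. Qed.

Lemma tensor_rk_loop_col f : is_loop N f -> rk P (setX (ground M) [set f]) = 0.
Proof. by move=> lf; case: HT => [[_ _ _ _ loop_col]] _; apply: loop_col. Qed.

Lemma tensor_rk_ground : rk P (setX (ground M) (ground N)) = rk M (ground M) * rk N (ground N).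
Proof. by case: HT => _; rewrite /mrank gP. Qed.

Lemma spans_setX_row I BN : I \subset ground M -> indep M I -> basis_of N (ground N) BN ->
  spans P (setX I BN) (setX I (ground N)).
Proof.
move=> IE indI [BNE _ rBN]; apply: (spans_pointwise HP) => [|[a y]].
  by rewrite subUset !setX_ground.
rewrite in_setX => /andP[aI yN]; have ne := nonloop_of_indep HM IE indI aI.
have aE : [set a] \subset I by rewrite sub1set.
have sp : spans P (setX [set a] BN) (setX [set a] (ground N)).
  by apply: spans_of_rk_eq; rewrite ?setXS // !tensor_rk_row.
have {}sp : spans P (setX I BN) (setX [set a] (ground N)).
  by apply: (spansSl HP _ _ sp); rewrite ?setXS // subUset !setX_ground // (subset_trans aE).
apply: (spansSr HP _ _ sp); first by rewrite subUset !setX_ground // (subset_trans aE).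
by rewrite sub1set in_setX set11.
Qed.

Lemma spans_setX_col A BA : A \subset ground M -> basis_of M A BA ->
  spans P (setX BA (ground N)) (setX A (ground N)).
Proof.
move=> AE [BAA _ rBA]; have BAE := subset_trans BAA AE.
apply: (spans_pointwise HP) => [|[a y]]; first by rewrite subUset !setX_ground.
rewrite in_setX => /andP[aA yN].
have aE : a \in ground M by apply: subsetP aA.
have ayE : [set (a, y)] \subset ground P by rewrite gP sub1set in_setX aE.
have [y0 | /eqP ny] := eqVneq (rk N [set y]) 0.
  apply: (spans_rk0 HP); first by rewrite subUset setX_ground.
  apply/eqP; rewrite -leqn0 -(tensor_rk_loop_col (conj yN y0)).
  apply: (rk_mono HP); last by rewrite setX_ground ?sub1set.
  by rewrite sub1set in_setX aE set11.
have sp : spans P (setX BA [set y]) (setX A [set y]).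
  by apply: spans_of_rk_eq; rewrite ?setXS // !tensor_rk_col.
have {}sp : spans P (setX BA (ground N)) (setX A [set y]).
  by apply: (spansSl HP _ _ sp); rewrite ?setXS ?sub1set // subUset !setX_ground ?sub1set.
apply: (spansSr HP _ _ sp); first by rewrite subUset !setX_ground ?sub1set.
by rewrite sub1set in_setX aA set11.
Qed.

Lemma spans_setX_basis A BA BN : A \subset ground M ->
  basis_of M A BA -> basis_of N (ground N) BN ->
  spans P (setX BA BN) (setX A (ground N)).
Proof.
move=> AE bBA bBN; have [BAA indBA _] := bBA; have [BNE _ _] := bBN.
have BAE := subset_trans BAA AE.
apply: (spans_trans HP _ (spans_setX_row BAE indBA bBN)).
  by rewrite !subUset !setX_ground.
by rewrite (setUidPr (setXS (subxx BA) BNE)); apply: spans_setX_col.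
Qed.

Lemma indep_setX I J (W : {set T1 * T2}) : I \subset ground M -> indep M I ->
  J \subset ground N -> indep N J -> W \subset setX I J -> indep P W.
Proof.
move=> IE indI JE indJ WIJ.
have [B IB bB] := basis_extend HM IE (subxx _) indI.
have [BN JBN bBN] := basis_extend HN JE (subxx _) indJ.
have [BE _ _] := bB; have [BNE _ _] := bBN.
have indB : indep P (setX B BN).
  rewrite /indep eqn_leq rk_le_card ?setX_ground //= cardsX.
  rewrite -(basis_rk bB) -(basis_rk bBN) -tensor_rk_ground.
  by apply: (spans_rk_le HP _ (spans_setX_basis (subxx _) bB bBN)); rewrite subUset !setX_ground.
by apply: (indepS HP _ _ indB); rewrite ?setX_ground // (subset_trans WIJ) ?setXS.
Qed.

Lemma rk_setX_ground A : A \subset ground M ->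
  rk P (setX A (ground N)) = rk M A * rk N (ground N).
Proof.
move=> AE; have [BA bBA] := basis_exists HM AE; have [BN bBN] := basis_exists HN (subxx _).
have [BAA indBA _] := bBA; have [BNE indBN _] := bBN.
rewrite (basis_rk bBA) (basis_rk bBN) -cardsX.
rewrite (spans_rk _ (spans_setX_basis AE bBA bBN)) ?setXS //.
by apply/eqP; apply: indep_setX (subset_trans BAA AE) indBA BNE indBN (subxx _).
Qed.

Lemma rk_contract_setX_ground C X : C \subset ground M -> X \subset ground M ->
  rk (mcontract P (setX C (ground N))) (setX X (ground N))
  = rk (mcontract M C) X * rk N (ground N).
Proof.
by move=> CE XE /=; rewrite -setXUl mulnBl !rk_setX_ground // subUset XE CE.
Qed.

Lemma rk_contract_row C e Y : C \subset ground M -> e \in ground M ->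
  rk M C < rk M (e |: C) -> Y \subset ground N ->
  rk (mcontract P (setX C (ground N))) (setX [set e] Y) = rk N Y.
Proof.
move=> CE eE ltC YE /=.
have [BC bBC] := basis_exists HM CE; have [BCC _ _] := bBC.
have BCE := subset_trans BCC CE.
have eBCE : e |: BC \subset ground M by rewrite subUset sub1set eE BCE.
have indeBC := indep_setU1 HM CE bBC eE ltC.
have ne := nonloop_of_indep HM eBCE indeBC (setU11 e BC).
have eBC : e \notin BC.
  by apply: contraTN ltC => eBC; rewrite (setUidPr _) ?ltnn // sub1set (subsetP BCC).
have [BY bBY] := basis_exists HN YE; have [BYY indBY rBY] := bBY.
have [BN BYBN bBN] := basis_extend HN (subset_trans BYY YE) (subxx _) indBY.
have [BNE indBN _] := bBN.
set W := setX [set e] BY :|: setX BC BN.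
have WZ : W \subset setX [set e] Y :|: setX C (ground N) by rewrite setUSS ?setXS.
have spW : spans P W (setX [set e] Y :|: setX C (ground N)).
  apply: (spansUU HP); last exact: spans_setX_basis bBC bBN.
    by rewrite !subUset !setX_ground ?sub1set ?(subset_trans BYY YE).
  by apply: spans_of_rk_eq; rewrite ?setXS // !tensor_rk_row ?(subset_trans BYY YE).
have indW : indep P W.
  by apply: indep_setX eBCE indeBC BNE indBN _; rewrite subUset !setXS ?subsetUl ?subsetUr.
rewrite (spans_rk WZ spW) (eqP indW) rk_setX_ground // (basis_rk bBC) (basis_rk bBN).
rewrite (basis_rk bBY) cardsU setXI (disjoint_setI0 _) ?disjoints1 //.
by rewrite !cardsX cards0 !mul0n subn0 cards1 mul1n addnK.
Qed.

Lemma rk_contract_col C f X : C \subset ground M -> is_nonloop N f -> X \subset ground M ->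
  rk (mcontract P (setX C (ground N))) (setX X [set f]) = rk (mcontract M C) X.
Proof.
move=> CE nf XE /=; have [fN _] := nf.
have [BC bBC] := basis_exists HM CE; have [BCC indBC _] := bBC.
have BCE := subset_trans BCC CE.
have XCE : X :|: C \subset ground M by rewrite subUset XE CE.
have [B BCB bB] := basis_extend HM (subset_trans BCC (subsetUr X C)) XCE indBC.
have [BXC indB _] := bB; have BE := subset_trans BXC XCE.
have fE : [set f] \subset ground N by rewrite sub1set.
have [BN fBN bBN] := basis_extend HN fE (subxx _) (indep_set1 HN nf).
have [BNE indBN _] := bBN.
have ZE : setX (X :|: C) [set f] :|: setX C (ground N) = setX X [set f] :|: setX C (ground N).
  by rewrite setXUl -setUA (setUidPr (setXS (subxx C) fE)).
set W := setX B [set f] :|: setX BC BN.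
have WZ : W \subset setX (X :|: C) [set f] :|: setX C (ground N) by rewrite setUSS ?setXS.
have spW : spans P W (setX (X :|: C) [set f] :|: setX C (ground N)).
  apply: (spansUU HP); last exact: spans_setX_basis bBC bBN.
    by rewrite !subUset !setX_ground.
  by apply: spans_of_rk_eq; rewrite ?setXS // !tensor_rk_col // (basis_rk bB) (eqP indB).
have indW : indep P W by apply: indep_setX BE indB BNE indBN _; rewrite subUset !setXS.
rewrite -ZE (spans_rk WZ spW) (eqP indW) rk_setX_ground // (basis_rk bB) (basis_rk bBC).
rewrite (basis_rk bBN) cardsU setXI (setIidPr BCB) (setIidPl fBN) !cardsX cards1.
by rewrite !muln1 -addnBAC ?addnK ?subset_leq_card.
Qed.

Lemma rk_contract_loop_col C f X : C \subset ground M -> is_loop N f -> X \subset ground M ->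
  rk (mcontract P (setX C (ground N))) (setX X [set f]) = 0.
Proof.
move=> CE lf XE /=; have [fN _] := lf.
have rX0 : rk P (setX X [set f]) = 0.
  apply/eqP; rewrite -leqn0 -(tensor_rk_loop_col lf).
  by apply: (rk_mono HP); rewrite ?setXS ?setX_ground ?sub1set ?set11.
by rewrite setUC (spans_rk0 HP _ rX0) ?subnn // subUset !setX_ground ?sub1set.
Qed.
End TensorProduct.

Theorem proposition2p6 (T1 T2 : finType) (M : matroid T1) (N : matroid T2)
    (P : matroid (T1 * T2)%type) (S T : {set T1}) :
  is_matroid M -> is_matroid N -> is_tensor_product M N P ->
  S \subset ground M -> T \subset ground M -> [disjoint S & T] ->
  is_tensor_product (minor M S T) N
    (minor P (setX S (ground N)) (setX T (ground N))).
Proof.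
move=> HM HN HT SE TE dST.
have gME : ground (minor M S T) \subset ground M.
  exact: subset_trans (subsetDl _ _) (subsetDl _ _).
have gP' : ground (minor P (setX S (ground N)) (setX T (ground N)))
         = setX (ground (minor M S T)) (ground N).
  by rewrite /= (tensor_ground HT) -!setXDl.
split; last by rewrite /mrank gP' (rk_contract_setX_ground HM HN HT).
split.
- split=> //; apply: (mcontract_matroid (mdelete_matroid (tensor_matroid HT) _)).
  by rewrite /= (tensor_ground HT) -setXDl setXS // subsetD TE disjoint_sym.
- move=> e [eM' ne] Y YE; rewrite setX_set1l.
  apply: (rk_contract_row HM HN HT) => //; first exact: subsetP eM'.
  by rewrite -subn_gt0 lt0n; apply/eqP.
- move=> f nf X XE; rewrite setX_set1r.
  exact: (rk_contract_col HM HN HT) (subset_trans XE gME).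
- move=> e [eM' le].
  by rewrite (rk_contract_setX_ground HM HN HT) ?le // sub1set (subsetP gME).
- by move=> f lf; apply: (rk_contract_loop_col HT TE lf gME).
Qed.
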